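(* Let $B'\in\mathcal X^+_{N-2}$ and $B\in{}'\mathcal X^{0,+}_{N-2}$ with $B'\preceq B$. Then $B'\in{}'\mathcal X^{0,+}_{N-2}$.
   Context: Let $N\ge 3$ be an odd integer and $F=\mathbb Z/2\mathbb Z$. For integers $i,j$ let $[i,j]=\{h\in\mathbb Z: i\le h\le j\}$ (empty if $i>j$). Let $S_N=[1,N]$. The set of all subsets of $S_N$ is an $F$-vector space with sum $X+X'=(X\cup X')-(X\cap X')$; let $E_N$ be the subspace of subsets of even cardinality. A $2$-element subset $\{i,j\}\subseteq S_N$ is written $ij$ when either ($i<j$ and $j-i$ odd) or ($i>j$ and $i-j$ even); each $2$-element subset has exactly one such writing. Let $\mathcal P_N$ be the set of all finite sets $B$ of pairwise disjoint $2$-element subsets of $S_N$; for $B\in\mathcal P_N$ let $\langle B\rangle$ be the $F$-subspace of $E_N$ spanned by the elements of $B$, $\mathrm{supp}(B)=\bigcup_{X\in B}X$, $B^0=\{\{i,j\}\in B: i-j\text{ even}\}$, $B^1=\{\{i,j\}\in B: i-j\text{ odd}\}$. A set $X\subseteq S_N$ is $0$-covered (resp. $1$-covered) by $B^1$ if there are $a_1b_1,\dots,a_sb_s\in B^1$ ($s\ge 0$, so $a_r<b_r$) with $X=[a_1,b_1]\sqcup\dots\sqcup[a_s,b_s]$ (resp. $X=[a_1,b_1]\sqcup\dots\sqcup[a_s,b_s]\sqcup\{u\}$ for some $u$), disjoint unions. Let ${}^*\mathcal P_N$ be the set of $B\in\mathcal P_N$ such that: for every $ij\in B^1$ the set $[i+1,j-1]$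 is $0$-covered by $B^1$; and there is a sequence $i_*(B)=(i_1,\dots,i_{2s})$ in $S_N$ with $B^0=\{i_{2s}i_1,i_{2s-1}i_2,\dots,i_{s+1}i_s\}$ (so $s=|B^0|$; the sequence is unique) such that, if $s\ge1$, each of $[i_1+1,i_2-1],\dots,[i_{s-1}+1,i_s-1],[i_{s+1}+1,i_{s+2}-1],\dots,[i_{2s-1}+1,i_{2s}-1]$ is $0$-covered by $B^1$. For $B\in{}^*\mathcal P_N$ with $i_*(B)=(i_1,\dots,i_{2s})$ consider: (I) $s=0$, or $s\ge1$ and $[1,i_1-1]$ and $[i_{2s}+1,N]$ are $0$-covered by $B^1$; (II) $N\notin\mathrm{supp}(B)$ and either $s=0$, or $s$ is odd and either (i) $[1,i_1-1]$ is $1$-covered and $[i_{2s}+1,N-1]$ is $0$-covered by $B^1$, or (ii) $[1,i_1-1]$ is $0$-covered and $[i_{2s}+1,N-1]$ is $1$-covered by $B^1$; (III) (I) holds and, if $s$ is even then $\{i,N\}\in B$ for some even $i$, if $s$ is odd then $\{i,N\}\in B$ for some odd $i$. Let $\mathcal X^+_{N-2}$, $\mathcal X^-_{N-2}$ be the sets of $B\in{}^*\mathcal P_N$ satisfying (II), (III) respectively, and $\mathcal X_{N-2}=\mathcal X^+_{N-2}\sqcup\mathcal X^-_{N-2}$. For $B\in\mathcal X^+_{N-2}$ with $s\ge1$ there is a unique $u_B$: in case (i), $u_B\in[1,i_1-1]$ with $[1,u_B-1]$, $[u_B+1,i_1-1]$ $0$-covered by $B^1$ ($u_B$ odd); in case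 (ii), $u_B\in[i_{2s}+1,N-1]$ with $[i_{2s}+1,u_B-1]$, $[u_B+1,N-1]$ $0$-covered by $B^1$ ($u_B$ even). Let ${}'\mathcal X^{0,+}_{N-2}=\{B\in\mathcal X^+_{N-2}:|B^0|=0,\ N-1\notin\mathrm{supp}(B)\}$. Put $[[ij]]=[i,j]$ if $i<j$ and $[[ij]]=[i,N]\cup[1,j]$ if $i>j$. For $B\in\mathcal X_{N-2}$ define ${}'\epsilon(B)\in E_N$: ${}'\epsilon(B)=\sum_{ij\in B}[[ij]]$ if $B\in\mathcal X^-_{N-2}$ or if $B\in\mathcal X^+_{N-2}$ with $|B^0|=0$; ${}'\epsilon(B)=\sum_{ij\in B}[[ij]]+[u_B,N]$ if $B\in\mathcal X^+_{N-2}$, $|B^0|$ odd, $u_B$ even; ${}'\epsilon(B)=\sum_{ij\in B}[[ij]]+\{N\}+[1,u_B]$ if $B\in\mathcal X^+_{N-2}$, $|B^0|$ odd, $u_B$ odd. For $B,B'\in\mathcal X_{N-2}$ write $B'\preceq B$ if there is a sequence $B'=B_0,\dots,B_h=B$ ($h\ge0$) in $\mathcal X_{N-2}$ with ${}'\epsilon(B_k)\in\langle B_{k+1}\rangle$ for $k=0,\dots,h-1$. *)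

(* Subsets of S_N = [1,N] are sets of 'I_N.+1 avoiding 0. *)
From mathcomp Require Import all_boot all_order.
Set Implicit Arguments. Unset Strict Implicit. Unset Printing Implicit Defensive.

Section Defs.
Variable N : nat.
Local Notation T := 'I_N.+1.

Definition itv (a b : nat) : {set T} := [set h : T | (1 <= h) && (a <= h <= b)].

(* sum in the F_2-vector space of subsets: the element h belongs to the sum
   of the family g X (X in C) iff it lies in an odd number of them *)
Definition sumSD (C : {set {set T}}) (g : {set T} -> {set T}) : {set T} :=
  [set h : T | odd #|[set X in C | h \in g X]|].
Definition setSD (A A' : {set T}) : {set T} := (A :\: A') :|: (A' :\: A).

Definition inSpan (B : {set {set T}}) (Y : {set T}) : Prop :=
  exists C : {set {set T}}, C \subset B /\ Y = sumSD C id.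

Definition PN (B : {set {set T}}) : Prop :=
  (forall X, X \in B -> #|X| = 2 /\ ord0 \notin X) /\
  (forall X Y, X \in B -> Y \in B -> X != Y -> [disjoint X & Y]).

Definition writ (i j : T) : bool :=
  ((i < j) && odd (j - i)) || ((j < i) && ~~ odd (i - j)).

Definition B0 (B : {set {set T}}) : {set {set T}} :=
  [set X in B | [exists i : T, exists j : T,
     [&& X == [set i; j], j < i & ~~ odd (i - j)]]].
Definition B1 (B : {set {set T}}) : {set {set T}} :=
  [set X in B | [exists i : T, exists j : T,
     [&& X == [set i; j], i < j & odd (j - i)]]].

Definition supp (B : {set {set T}}) : {set T} := \bigcup_(X in B) X.
Definition inSupp (B : {set {set T}}) (n : nat) : bool :=
  [exists h in supp B, val h == n].

Definition hull (X : {set T}) : {set T} :=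
  [set h : T | [exists a in X, exists b in X, (a <= h <= b)]].

Definition cov0 (B : {set {set T}}) (Y : {set T}) : Prop :=
  exists C : {set {set T}}, C \subset B1 B /\
    (forall X1 X2, X1 \in C -> X2 \in C -> X1 != X2 ->
        [disjoint hull X1 & hull X2]) /\
    Y = \bigcup_(X in C) hull X.
Definition cov1 (B : {set {set T}}) (Y : {set T}) : Prop :=
  exists u : T, u \in Y /\ cov0 B (Y :\ u).

Definition seqP (B : {set {set T}}) (f : nat -> T) (s : nat) : Prop :=
  #|B0 B| = s /\
  (forall k, 1 <= k <= 2 * s -> 0 < f k) /\
  (forall k, 1 <= k <= s ->
     f k < f (2 * s + 1 - k) /\ ~~ odd (f (2 * s + 1 - k) - f k)) /\
  (forall X, X \in B0 B <->
     exists k, 1 <= k <= s /\ X = [set f (2 * s + 1 - k); f k]) /\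
  (forall k, 1 <= k < s -> cov0 B (itv (f k).+1 (f k.+1).-1)) /\
  (forall k, s + 1 <= k < 2 * s -> cov0 B (itv (f k).+1 (f k.+1).-1)).

Definition starBase (B : {set {set T}}) : Prop :=
  PN B /\
  (forall i j : T, [set i; j] \in B1 B -> i < j -> cov0 B (itv i.+1 j.-1)).

Definition condI (B : {set {set T}}) (f : nat -> T) (s : nat) : Prop :=
  s = 0 \/ (1 <= s /\ cov0 B (itv 1 (f 1).-1) /\ cov0 B (itv (f (2 * s)).+1 N)).

Definition caseI (B : {set {set T}}) (f : nat -> T) (s : nat) : Prop :=
  cov1 B (itv 1 (f 1).-1) /\ cov0 B (itv (f (2 * s)).+1 N.-1).
Definition caseII (B : {set {set T}}) (f : nat -> T) (s : nat) : Prop :=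
  cov0 B (itv 1 (f 1).-1) /\ cov1 B (itv (f (2 * s)).+1 N.-1).

Definition condII (B : {set {set T}}) (f : nat -> T) (s : nat) : Prop :=
  ~~ inSupp B N /\
  (s = 0 \/ (odd s /\ (caseI B f s \/ caseII B f s))).

Definition condIII (B : {set {set T}}) (f : nat -> T) (s : nat) : Prop :=
  condI B f s /\
  (~~ odd s -> exists i : T, ~~ odd i /\ [set i; ord_max] \in B) /\
  (odd s -> exists i : T, odd i /\ [set i; ord_max] \in B).

Definition Xplus (B : {set {set T}}) : Prop :=
  starBase B /\ exists f s, seqP B f s /\ condII B f s.
Definition Xminus (B : {set {set T}}) : Prop :=
  starBase B /\ exists f s, seqP B f s /\ condIII B f s.
Definition inX (B : {set {set T}}) : Prop := Xplus B \/ Xminus B.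
Definition X0plus' (B : {set {set T}}) : Prop :=
  Xplus B /\ #|B0 B| = 0 /\ ~~ inSupp B N.-1.

Definition uB (B : {set {set T}}) (u : nat) : Prop :=
  exists f s, seqP B f s /\ condII B f s /\ 1 <= s /\
   ((caseI B f s /\ 1 <= u <= (f 1).-1 /\
       cov0 B (itv 1 u.-1) /\ cov0 B (itv u.+1 (f 1).-1)) \/
    (caseII B f s /\ (f (2 * s)).+1 <= u <= N.-1 /\
       cov0 B (itv (f (2 * s)).+1 u.-1) /\ cov0 B (itv u.+1 N.-1))).

Definition ditv (i j : T) : {set T} :=
  if i < j then itv i j else itv i N :|: itv 1 j.
Definition wrset (X : {set T}) : {set T} :=
  [set h : T | [exists i : T, exists j : T,
     [&& X == [set i; j], writ i j & h \in ditv i j]]].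
Definition sumW (B : {set {set T}}) : {set T} := sumSD B wrset.

Definition epsP (B : {set {set T}}) (Y : {set T}) : Prop :=
  ((Xminus B \/ (Xplus B /\ #|B0 B| = 0)) /\ Y = sumW B) \/
  (Xplus B /\ odd #|B0 B| /\ exists u, uB B u /\
     (~~ odd u -> Y = setSD (sumW B) (itv u N)) /\
     (odd u -> Y = setSD (sumW B) (setSD [set ord_max] (itv 1 u)))).

Inductive preceq : {set {set T}} -> {set {set T}} -> Prop :=
| preceq_refl B : inX B -> preceq B B
| preceq_step B0' B1' B : inX B0' -> inX B1' ->
    (exists Y, epsP B0' Y /\ inSpan B1' Y) -> preceq B1' B -> preceq B0' B.

End Defs.

(* It suffices to treat one step of the chain: 'eps(B') lies in <C> for some C in
   'X^{0,+}_{N-2}.  As C has no even pairs, every element of <C> is a disjoint union of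
   pairs {i, j} with i - j odd: it has as many odd as even points, and it avoids N and
   N - 1, which lie outside supp C.
   - If B' is in X^-, then N lies in 'eps(B').
   - If B' is in X^+ with |B'^0| = 0 and N - 1 is in supp B', then N - 1 lies in 'eps(B').
   - If B' is in X^+ with |B'^0| = s odd, then 'eps(B') is unbalanced: on supp B'^1 it is
     a union of pairs of B'^1, and off supp B'^1 it is nonempty with all its points of the
     parity of i_1 (case (ii)) or of i_{2s} (case (i)).  This uses i_1 < ... < i_{2s},
     forced by the 0-covered gaps, and a count of the pairs of B'^0 whose [[.]] contains
     a given point; case (i) is the mirror image of case (ii) under x |-> N - x. *)

From Pilot Require Import Defs.
From mathcomp Require Import all_boot all_order zify.
Set Implicit Arguments. Unset Strict Implicit. Unset Printing Implicit Defensive.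
Import Order.TTheory.

Section Chain.
Context {disp : Order.disp_t} {T : orderType disp}.
Variables (free : pred T) (g : nat -> T) (n : nat).
Hypothesis free_g : forall i, i <= n -> free (g i).
Hypothesis g_inj : forall i j, i <= n -> j <= n -> g i = g j -> i = j.
Hypothesis g0_least : forall x, free x -> (g 0 <= x)%O.
Hypothesis gap_notfree : forall i, i < n -> forall x, (g i < x < g i.+1)%O -> ~~ free x.

Lemma chain_prefix i : i <= n ->
  (forall j, j < i -> (g j < g j.+1)%O) /\
  (forall x, free x -> (x < g i)%O -> exists2 j, j < i & x = g j).
Proof.
elim: i => [_ | i IH lt_in].
  by split=> // x /g0_least; rewrite leNgt => /negPf ->.
have [IHinc IHbelow] := IH (ltnW lt_in).
have lt_step : (g i < g i.+1)%O.
  case: (ltgtP (g i) (g i.+1)) => // [gt | eq].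
  - have [j lt_ji /esym/g_inj eq_ij] := IHbelow _ (free_g lt_in) gt.
    by have := eq_ij (leq_trans (ltnW lt_ji) (ltnW lt_in)) lt_in; lia.
  - by have := g_inj (ltnW lt_in) lt_in eq; lia.
split=> [j | x free_x lt_x].
  by rewrite ltnS leq_eqVlt => /predU1P [-> // | /IHinc].
case: (ltgtP x (g i)) => [lt | gt | ->].
- by have [j lt_ji ->] := IHbelow _ free_x lt; exists j => //; apply: ltnW.
- by move: free_x; rewrite (negPf (gap_notfree lt_in _)) // gt lt_x.
- by exists i.
Qed.

Lemma chain_increasing i : i < n -> (g i < g i.+1)%O.
Proof. by move=> lt_in; apply: (chain_prefix (leqnn n)).1. Qed.

End Chain.

Lemma count_iota_ge m n : 1 <= m <= n.+1 ->
  count (fun i => m <= i) (iota 1 n) = n.+1 - m.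
Proof.
move=> m_rng; have -> : iota 1 n = iota 1 m.-1 ++ iota m (n.+1 - m).
  by rewrite {1}(_ : n = m.-1 + (n.+1 - m)) ?iotaD ?add1n ?prednK //; lia.
rewrite count_cat (eq_in_count (a2 := pred0)) ?count_pred0; last first.
  by move=> i; rewrite mem_iota /=; lia.
rewrite (eq_in_count (a2 := predT)) ?count_predT ?size_iota //.
by move=> i; rewrite mem_iota /=; lia.
Qed.

(* An abstraction of i_*(B) = (f 1, ..., f (2 s)) for B in X^+_{N-2} with s odd:
   [free] holds at the points of [1, N] outside supp B^1, and consecutive i_k,
   except the innermost pair i_s, i_{s+1}, are separated by a 0-covered gap. *)
Record frame (N s : nat) (f : nat -> nat) (free : pred nat) : Prop := Frame {
  odd_s : odd s;
  free0 : ~~ free 0;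
  free_f : forall k, 1 <= k <= 2 * s -> free (f k);
  f_inj : forall j k, 1 <= j <= 2 * s -> 1 <= k <= 2 * s -> f j = f k -> j = k;
  f_lt_partner : forall k, 1 <= k <= s -> f k < f (2 * s + 1 - k);
  odd_f_partner : forall k, 1 <= k <= s -> odd (f k) = odd (f (2 * s + 1 - k));
  f_lt_N : forall k, 1 <= k <= 2 * s -> f k < N;
  gap_notfree : forall k, k != s -> 1 <= k < 2 * s ->
    forall h, f k < h < f k.+1 -> ~~ free h;
  odd_gap : forall k, k != s -> 1 <= k < 2 * s -> f k < f k.+1 -> odd (f k.+1 - f k)
}.

Record right_end (N s u : nat) (f : nat -> nat) (free : pred nat) : Prop := RightEnd {
  low_notfree : forall h, 1 <= h < f 1 -> ~~ free h;
  odd_f1 : odd (f 1);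
  high_notfree_but_u : forall h, f (2 * s) < h < N -> h != u -> ~~ free h;
  even_u : ~~ odd u;
  top_lt_u : f (2 * s) < u;
  u_lt_N : u < N
}.

Record left_end (N s u : nat) (f : nat -> nat) (free : pred nat) : Prop := LeftEnd {
  low_notfree_but_u : forall h, 1 <= h < f 1 -> h != u -> ~~ free h;
  odd_u : odd u;
  u_gt0 : 0 < u;
  u_lt_f1 : u < f 1;
  even_top : ~~ odd (f (2 * s));
  high_notfree : forall h, f (2 * s) < h < N -> ~~ free h
}.

Section Frame.
Variables (N s : nat) (f : nat -> nat) (free : pred nat).
Hypothesis F : frame N s f free.

Lemma frame_s_gt0 : 0 < s.
Proof. by have := odd_s F; lia. Qed.

Lemma f_gt0 k : 1 <= k <= 2 * s -> 0 < f k.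
Proof.
move=> k_rng; rewrite lt0n; apply/eqP => f0.
by have := free_f F k_rng; rewrite f0 (negPf (free0 F)).
Qed.

Lemma f_neq j k : 1 <= j <= 2 * s -> 1 <= k <= 2 * s -> j != k -> f j != f k.
Proof. by move=> j_rng k_rng; apply: contra_neq; apply: (f_inj F). Qed.

(* For an even pair a < b one has [[ba]] = [b, N] u [1, a]: this counts the pairs of
   B^0 whose [[.]] contains x. *)
Definition n_outside (x : nat) : nat :=
  count (fun k => (x <= f k) || (f (2 * s + 1 - k) <= x)) (iota 1 s).

Lemma n_outside_above x : (forall k, 1 <= k <= 2 * s -> f k <= x) -> n_outside x = s.
Proof.
move=> le_x; rewrite /n_outside (eq_in_count (a2 := predT)) ?count_predT ?size_iota //.
by move=> k; rewrite mem_iota /= => k_rng; rewrite le_x ?orbT //; lia.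
Qed.

Lemma n_outside_below x : (forall k, 1 <= k <= 2 * s -> x <= f k) -> n_outside x = s.
Proof.
move=> ge_x; rewrite /n_outside (eq_in_count (a2 := predT)) ?count_predT ?size_iota //.
by move=> k; rewrite mem_iota /= => k_rng; rewrite ge_x //; lia.
Qed.

Section RightEnd.
Variable u : nat.
Hypothesis R : right_end N s u f free.

Lemma f_increasing_low k : 1 <= k < s -> f k < f k.+1.
Proof.
move=> k_rng; have -> : k = k.-1.+1 by lia.
apply: (@chain_increasing _ nat free (fun i => f i.+1) s.-1); try lia.
- by move=> i le_i; apply: (free_f F); lia.
- by move=> i j le_i le_j /eqP; apply: contraTeq => neq_ij; rewrite f_neq //; lia.
- move=> x free_x; rewrite leEnat leqNgt; apply/negP => lt_x.
  case: (posnP x) => [x0 | x_gt0]; first by move: free_x; rewrite x0 (negPf (free0 F)).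
  by move: free_x; rewrite (negPf (low_notfree R _)) //; lia.
- by move=> i lt_i x; apply: (gap_notfree F); lia.
Qed.

Lemma odd_f_low k : 1 <= k <= s -> odd (f k) = odd (f 1 + k.+1).
Proof.
elim: k => [| k IH] // k_rng; have [-> | k_gt0] := posnP k; first by lia.
have lt_k := f_increasing_low (_ : 1 <= k < s); have := odd_gap F (_ : k != s); lia.
Qed.

(* For j = s + 1 parity excludes f j = u; otherwise f (j - 1) would be a free point
   strictly between f (2 s) and u. *)
Lemma f_neq_u j : s < j <= 2 * s -> f j != u.
Proof.
move=> j_rng; apply/eqP => f_j; have s_gt0 := frame_s_gt0; have u_top := top_lt_u R.
have [j_top | j_lt] := eqVneq j (2 * s); first by move: f_j; rewrite j_top; lia.
have [j_mid | j_gt] := eqVneq j s.+1.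
  have := odd_f_partner F (_ : 1 <= s <= s); rewrite (_ : 2 * s + 1 - s = j) ?f_j; last by lia.
  by have := odd_f_low (_ : 1 <= s <= s); have := odd_f1 R; have := even_u R; have := odd_s F; lia.
have p_rng : 1 <= j.-1 <= 2 * s by lia.
have free_p := free_f F p_rng; have p_N := f_lt_N F p_rng.
have p_neq_u : f j.-1 != u by rewrite -f_j f_neq //; lia.
have high_p : ~~ (f (2 * s) < f j.-1 < N).
  by apply: contraL free_p => p_rng'; rewrite (negPf (high_notfree_but_u R _ p_neq_u)).
have : ~~ free (f (2 * s)).
  have succ_p : j.-1.+1 = j by lia.
  apply: (gap_notfree F (k := j.-1)); rewrite ?succ_p ?f_j; try lia.
  by have := f_neq (_ : 1 <= j.-1 <= 2 * s) (_ : 1 <= 2 * s <= 2 * s); lia.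
by rewrite (free_f F) //; lia.
Qed.

Lemma f_le_top k : 1 <= k <= 2 * s -> f k <= f (2 * s).
Proof.
have high j : s < j <= 2 * s -> f j <= f (2 * s).
  move=> j_rng; rewrite leqNgt; apply/negP => lt_top.
  have := free_f F (_ : 1 <= j <= 2 * s); have := f_lt_N F (_ : 1 <= j <= 2 * s).
  by move=> lt_N; rewrite (negPf (high_notfree_but_u R _ (f_neq_u j_rng))) //; lia.
move=> k_rng; case: (leqP k s) => [le_ks | gt_ks]; last by apply: high; lia.
by have := f_lt_partner F (_ : 1 <= k <= s); have := high (2 * s + 1 - k); lia.
Qed.

Lemma f_increasing_high k : s < k < 2 * s -> f k < f k.+1.
Proof.
move=> k_rng; pose free_below := [pred x | free x & x <= f (2 * s)].
have : (f (2 * s - (2 * s - k.+1)) < f (2 * s - (2 * s - k.+1).+1) :> nat^d)%O.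
  apply: (@chain_increasing _ (nat^d) free_below (fun i => f (2 * s - i)) s.-1); last by lia.
  - by move=> i le_i; apply/andP; split; [apply: (free_f F) | apply: f_le_top]; lia.
  - by move=> i j le_i le_j /eqP; apply: contraTeq => neq_ij; rewrite f_neq //; lia.
  - by move=> x /andP [_ le_x]; rewrite leEdual subn0.
  - move=> i lt_i x; rewrite !ltEdual => x_rng; apply/negP => /andP [free_x _].
    have := gap_notfree F (k := 2 * s - i.+1) _ _ (h := x).
    by rewrite (_ : (2 * s - i.+1).+1 = 2 * s - i) ?free_x //; lia.
have -> : 2 * s - (2 * s - k.+1) = k.+1 by lia.
by have -> : 2 * s - (2 * s - k.+1).+1 = k by lia.
Qed.

Lemma f_increasing k : 1 <= k < 2 * s -> f k < f k.+1.
Proof.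
move=> k_rng; case: (ltngtP k s) => [lt_ks | gt_ks | ->].
- by apply: f_increasing_low; lia.
- by apply: f_increasing_high; lia.
- by have := f_lt_partner F (_ : 1 <= s <= s); rewrite (_ : 2 * s + 1 - s = s.+1) //; lia.
Qed.

Lemma f_ltn : {in [pred k | 1 <= k <= 2 * s] &, {homo f : j k / j < k}}.
Proof.
apply: homo_ltn_in => [y x z | j k j_rng k_rng i | k k_rng Sk_rng]; first exact: ltn_trans.
  by rewrite !inE in j_rng k_rng *; lia.
by apply: f_increasing; rewrite !inE in k_rng Sk_rng; lia.
Qed.

Lemma f_leq j k : 1 <= j <= 2 * s -> 1 <= k <= 2 * s -> (f j <= f k) = (j <= k).
Proof.
move=> j_rng k_rng; case: (ltngtP j k) => [lt | gt | -> //]; last exact: leqnn.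
- by rewrite ltnW // f_ltn // inE.
- by apply/negbTE; rewrite -ltnNge f_ltn // inE.
Qed.

Lemma n_outside_f k : 1 <= k <= 2 * s -> n_outside (f k) = s.+1 - minn k (2 * s + 1 - k).
Proof.
move=> k_rng; rewrite /n_outside -count_iota_ge; last by lia.
apply: eq_in_count => i; rewrite mem_iota /= => i_rng.
by rewrite !f_leq; lia.
Qed.

Lemma odd_f k : 1 <= k <= 2 * s -> odd (f k) = odd (f 1 + (minn k (2 * s + 1 - k)).+1).
Proof.
move=> k_rng; case: (leqP k s) => [le_ks | gt_ks].
  by have := odd_f_low (_ : 1 <= k <= s); lia.
have := odd_f_partner F (_ : 1 <= 2 * s + 1 - k <= s).
have := odd_f_low (_ : 1 <= 2 * s + 1 - k <= s).
by rewrite (_ : 2 * s + 1 - (2 * s + 1 - k) = k); lia.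
Qed.

Lemma n_outside_mid x : f s < x < f s.+1 -> n_outside x = 0.
Proof.
move=> x_rng; have s_gt0 := frame_s_gt0.
rewrite /n_outside (eq_in_count (a2 := pred0)) ?count_pred0 //.
move=> i; rewrite mem_iota /= => i_rng.
have := f_leq (_ : 1 <= i <= 2 * s) (_ : 1 <= s <= 2 * s).
have := f_leq (_ : 1 <= s.+1 <= 2 * s) (_ : 1 <= 2 * s + 1 - i <= 2 * s).
lia.
Qed.

Lemma free_between_ends x : free x -> f 1 <= x <= f (2 * s) ->
  (exists2 k, 1 <= k <= 2 * s & x = f k) \/ f s < x < f s.+1.
Proof.
move=> free_x x_rng; have s_gt0 := frame_s_gt0.
have exP : exists k, (1 <= k <= 2 * s) && (f k <= x) by exists 1; lia.
have ubP k : (1 <= k <= 2 * s) && (f k <= x) -> k <= 2 * s by lia.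
case: (ex_maxnP exP ubP) => k /andP [k_rng le_x] k_max.
have [eq_x | lt_x] := eqVneq (f k) x; first by left; exists k.
have lt_k : k < 2 * s.
  case: (ltngtP k (2 * s)) => // [gt_k | k_top]; first by lia.
  by move: lt_x le_x; rewrite k_top; lia.
have next_gt : x < f k.+1.
  by rewrite ltnNge; apply/negP => le; have := k_max k.+1; lia.
have [k_s | neq_ks] := eqVneq k s.
  by right; move: le_x lt_x next_gt; rewrite k_s; lia.
by move: free_x; rewrite (negPf (gap_notfree F neq_ks _ (h := x) _)) //; lia.
Qed.

Lemma odd_eps_right x : free x -> odd (n_outside x) != (u <= x) -> odd x = odd (f 1).
Proof.
move=> free_x in_eps; have s_gt0 := frame_s_gt0.
have u_top := top_lt_u R; have u_N := u_lt_N R; have odd_s := odd_s F.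
have [lt_low | ge_low] := ltnP x (f 1).
  case: (posnP x) => [x0 | x_gt0]; first by move: free_x; rewrite x0 (negPf (free0 F)).
  by move: free_x; rewrite (negPf (low_notfree R _)) //; lia.
have [gt_top | le_top] := ltnP (f (2 * s)) x.
  move: in_eps; rewrite n_outside_above => [| k k_rng]; last first.
    by have := f_le_top k_rng; lia.
  have [-> | neq_xu] := eqVneq x u; first by rewrite leqnn odd_s.
  have [lt_N | ge_N] := ltnP x N.
    by move: free_x; rewrite (negPf (high_notfree_but_u R _ neq_xu)) //; lia.
  by rewrite odd_s (_ : u <= x); lia.
move: in_eps; case: (free_between_ends free_x (_ : f 1 <= x <= f (2 * s)))
  => [| [k k_rng ->] | x_mid].
- by lia.
- by rewrite n_outside_f // odd_f //; have := f_le_top k_rng; lia.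
rewrite n_outside_mid //.
by have := f_le_top (_ : 1 <= s.+1 <= 2 * s); lia.
Qed.

Lemma eps_right_f1 : odd (n_outside (f 1)) != (u <= f 1).
Proof.
have s_gt0 := frame_s_gt0.
rewrite n_outside_below => [| k k_rng]; last by rewrite f_leq; lia.
by have := f_le_top (_ : 1 <= 1 <= 2 * s); have := top_lt_u R; have := odd_s F; lia.
Qed.

End RightEnd.
End Frame.

(* The reflection x |-> N - x of the points, and k |-> 2 s + 1 - k of the indices,
   exchanges case (i) and case (ii). *)
Definition mirror_f (N s : nat) (f : nat -> nat) (k : nat) : nat := N - f (2 * s + 1 - k).
Definition mirror_free (N : nat) (free : pred nat) : pred nat :=
  fun x => (0 < x) && free (N - x).

Section Mirror.
Variables (N s : nat) (f : nat -> nat) (free : pred nat).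
Hypothesis F : frame N s f free.
Local Notation f' := (mirror_f N s f).
Local Notation free' := (mirror_free N free).

Lemma mirror_partner k : 1 <= k <= 2 * s -> f' (2 * s + 1 - k) = N - f k.
Proof. by move=> k_rng; rewrite /mirror_f (_ : 2 * s + 1 - (2 * s + 1 - k) = k) //; lia. Qed.

Lemma frame_mirror : frame N s f' free'.
Proof.
have ltN := f_lt_N F; have gt0 := f_gt0 F.
split.
- exact: odd_s F.
- by [].
- move=> k k_rng; rewrite /mirror_free /mirror_f subKn; last first.
    by have := ltN (2 * s + 1 - k); lia.
  by rewrite (free_f F) ?andbT; have := ltN (2 * s + 1 - k); lia.
- move=> j k j_rng k_rng; rewrite /mirror_f => eq_f.
  have := ltN (2 * s + 1 - j) _; have := ltN (2 * s + 1 - k) _.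
  have := f_inj F (_ : 1 <= 2 * s + 1 - j <= 2 * s) (_ : 1 <= 2 * s + 1 - k <= 2 * s).
  lia.
- move=> k k_rng; rewrite mirror_partner; last by lia.
  by have := f_lt_partner F k_rng; have := ltN (2 * s + 1 - k) _; rewrite /mirror_f; lia.
- move=> k k_rng; rewrite mirror_partner; last by lia.
  have := odd_f_partner F k_rng; have := ltN (2 * s + 1 - k) _; have := ltN k _.
  by rewrite /mirror_f; lia.
- move=> k k_rng; have := gt0 (2 * s + 1 - k) _; have := ltN (2 * s + 1 - k) _.
  by rewrite /mirror_f; lia.
- move=> k neq_ks k_rng h; rewrite /mirror_f => h_rng; apply/negP => /andP [h_gt0 free_h].
  have := gap_notfree F (k := 2 * s - k) _ _ (h := N - h).
  rewrite free_h (_ : (2 * s - k).+1 = 2 * s + 1 - k); last by lia.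
  rewrite (_ : 2 * s + 1 - k.+1 = 2 * s - k) in h_rng; last by lia.
  by have := ltN (2 * s + 1 - k) _; have := ltN (2 * s - k) _; lia.
- move=> k neq_ks k_rng; rewrite /mirror_f (_ : 2 * s + 1 - k.+1 = 2 * s - k); last by lia.
  move=> lt_f; have := odd_gap F (k := 2 * s - k) _ _.
  rewrite (_ : (2 * s - k).+1 = 2 * s + 1 - k); last by lia.
  by have := ltN (2 * s + 1 - k) _; have := ltN (2 * s - k) _; lia.
Qed.

Lemma n_outside_mirror x : x <= N -> n_outside s f' (N - x) = n_outside s f x.
Proof.
move=> le_xN; apply: eq_in_count => k; rewrite mem_iota => k_rng.
rewrite mirror_partner /mirror_f; last by lia.
by have := f_lt_N F (_ : 1 <= k <= 2 * s); have := f_lt_N F (_ : 1 <= 2 * s + 1 - k <= 2 * s); lia.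
Qed.

Section LeftEnd.
Variable u : nat.
Hypotheses (odd_N : odd N) (L : left_end N s u f free).

Lemma right_end_mirror : right_end N s (N - u) f' free'.
Proof.
have s_gt0 := frame_s_gt0 F.
have top_N : f (2 * s) < N by apply: (f_lt_N F); lia.
have f1_N : f 1 < N by apply: (f_lt_N F); lia.
have u_f1 := u_lt_f1 L; have u_gt0 := u_gt0 L.
have f'1 : f' 1 = N - f (2 * s) by rewrite /mirror_f addnK.
have f'top : f' (2 * s) = N - f 1 by rewrite /mirror_f (_ : 2 * s + 1 - 2 * s = 1) //; lia.
split; rewrite ?f'1 ?f'top /mirror_free.
- move=> h h_rng; apply/negP => /andP [_ free_h].
  by move: free_h; rewrite (negPf (high_notfree L _)) //; lia.
- by have := even_top L; lia.
- move=> h h_rng neq_h; apply/negP => /andP [_ free_h].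
  by move: free_h; rewrite (negPf (low_notfree_but_u L _ _)) //; apply/eqP; lia.
- by have := odd_u L; lia.
- by lia.
- by lia.
Qed.

Lemma odd_eps_left x : free x -> x < N ->
  odd (n_outside s f x) != (x <= u) -> odd x = odd (f (2 * s)).
Proof.
move=> free_x lt_xN in_eps; have s_gt0 := frame_s_gt0 F.
have top_N : f (2 * s) < N by apply: (f_lt_N F); lia.
have f1_N : f 1 < N by apply: (f_lt_N F); lia.
have free'_x : free' (N - x) by rewrite /mirror_free subKn ?free_x ?andbT; lia.
have := odd_eps_right frame_mirror right_end_mirror free'_x.
rewrite n_outside_mirror /mirror_f ?addnK; last by lia.
by have := u_lt_f1 L; move: in_eps; lia.
Qed.

Lemma eps_left_top : odd (n_outside s f (f (2 * s))) != (f (2 * s) <= u).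
Proof.
have s_gt0 := frame_s_gt0 F.
have top_N : f (2 * s) < N by apply: (f_lt_N F); lia.
have f1_N : f 1 < N by apply: (f_lt_N F); lia.
have := eps_right_f1 frame_mirror right_end_mirror.
rewrite /mirror_f addnK -/(mirror_f N s f) n_outside_mirror; last by lia.
by have := u_lt_f1 L; lia.
Qed.

End LeftEnd.
End Mirror.

Section Pairs.
Variable N : nat.
Local Notation T := 'I_N.+1.

Lemma mem_itv (a b : nat) (h : T) : (h \in itv N a b) = (1 <= h) && (a <= h <= b).
Proof. by rewrite inE. Qed.

Lemma set2_of_card2 (X : {set T}) : #|X| = 2 -> ord0 \notin X ->
  exists i j : T, [/\ 0 < i, i < j & X = [set i; j]].
Proof.
move/eqP/cards2P => [a [b [neq_ab ->]]]; rewrite !inE negb_or => /andP [a0 b0].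
have pos (c : T) : ord0 != c -> 0 < c.
  by rewrite lt0n; apply: contra => /eqP c0; apply/eqP/val_inj.
case: (ltngtP a b) => [lt | gt | eq].
- by exists a, b; rewrite pos.
- by exists b, a; rewrite pos // setUC.
- by move: neq_ab; rewrite (val_inj eq) eqxx.
Qed.

Lemma set2_inj (i j i' j' : T) : i < j -> i' < j' -> [set i; j] = [set i'; j'] ->
  i = i' /\ j = j'.
Proof.
move=> lt lt' eq_set.
have mem_i : i \in [set i'; j'] by rewrite -eq_set !inE eqxx.
have mem_j : j \in [set i'; j'] by rewrite -eq_set !inE eqxx orbT.
have mem_i' : i' \in [set i; j] by rewrite eq_set !inE eqxx.
have mem_j' : j' \in [set i; j] by rewrite eq_set !inE eqxx orbT.
move: mem_i mem_j mem_i' mem_j'; rewrite !inE.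
move=> /orP [] /eqP e1 /orP [] /eqP e2 /orP [] /eqP e3 /orP [] /eqP e4;
  subst; try by split.
all: by move: lt lt'; lia.
Qed.

Lemma mem_B1_set2 (B : {set {set T}}) (i j : T) : i < j ->
  ([set i; j] \in B1 B) = ([set i; j] \in B) && odd (j - i).
Proof.
move=> lt; rewrite inE; case: ([set i; j] \in B) => //=.
apply/existsP/idP => [[i' /existsP [j' /and3P [/eqP eq_set lt' odd_ij]]] | odd_ij].
  by have [-> ->] := set2_inj lt lt' eq_set.
by exists i; apply/existsP; exists j; rewrite eqxx lt odd_ij.
Qed.

Lemma mem_B0_set2 (B : {set {set T}}) (i j : T) : i < j ->
  ([set i; j] \in B0 B) = ([set i; j] \in B) && ~~ odd (j - i).
Proof.
move=> lt; rewrite inE; case: ([set i; j] \in B) => //=.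
apply/existsP/idP => [[j' /existsP [i' /and3P [/eqP eq_set lt' even_ij]]] | even_ij].
  by rewrite [[set j'; i']]setUC in eq_set; have [-> ->] := set2_inj lt lt' eq_set.
by exists j; apply/existsP; exists i; rewrite setUC eqxx lt even_ij.
Qed.

Lemma mem_hull_set2 (i j h : T) : i <= j -> (h \in hull [set i; j]) = (i <= h <= j).
Proof.
move=> le; rewrite inE; apply/existsP/idP.
- move=> [a /andP [+ /existsP [b /andP [+ /andP [ha hb]]]]].
  by rewrite !inE => /orP [] /eqP ea /orP [] /eqP eb; subst; lia.
- move=> h_rng; exists i; rewrite !inE eqxx /=; apply/existsP; exists j.
  by rewrite !inE eqxx orbT h_rng.
Qed.

Lemma mem_wrset_set2 (i j h : T) : 0 < i -> i < j ->
  (h \in wrset [set i; j]) =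
  if odd (j - i) then i <= h <= j else (0 < h) && ((j <= h) || (h <= i)).
Proof.
move=> i0 lt; have h_N := leq_ord h; rewrite inE; apply/existsP/idP.
- move=> [i' /existsP [j' /and3P [/eqP eq_set]]].
  rewrite /writ /ditv; case: (ltngtP i' j') => [lt' | gt' | eq'] /=.
  + by have [<- <-] := set2_inj lt lt' eq_set; rewrite orbF => ->; rewrite mem_itv; lia.
  + rewrite [[set i'; j']]setUC in eq_set; have [<- <-] := set2_inj lt gt' eq_set.
    by move=> /negPf ->; rewrite inE !mem_itv; lia.
  + by [].
- case: ifP => odd_ij h_rng.
  + exists i; apply/existsP; exists j; rewrite eqxx /writ lt odd_ij /ditv lt mem_itv.
    by move: h_rng; lia.
  + exists j; apply/existsP; exists i; rewrite setUC eqxx /writ lt odd_ij /= ?orbT.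
    by rewrite /ditv ltnNge (ltnW lt) /= inE !mem_itv; move: h_rng; lia.
Qed.

End Pairs.

Lemma card_cover_pred (T : finType) (P : {set {set T}}) (K : pred T) : trivIset P ->
  (forall A, A \in P -> #|[set x in A | K x]| = 1) -> #|[set x in cover P | K x]| = #|P|.
Proof.
move=> triv_P one_K; rewrite -sum1dep_card (big_trivIset_cond _ triv_P) -sum1_card.
apply: eq_bigr => A A_P; rewrite sum1dep_card -(one_K A A_P).
by apply: eq_card => x; rewrite !inE.
Qed.

Section Structure.
Variable N : nat.
Local Notation T := 'I_N.+1.

Lemma card_itv (a b : nat) : 1 <= a -> b <= N -> #|itv N a b| = b.+1 - a.
Proof.
move=> a1; elim: b => [| b IH] le_bN.
  have -> : itv N a 0 = set0 by apply/setP => h; rewrite mem_itv inE; lia.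
  by rewrite cards0; lia.
have val_b : (inord b.+1 : T) = b.+1 :> nat by rewrite inordK.
case: (leqP a b.+1) => le_ab.
  have -> : itv N a b.+1 = (inord b.+1 : T) |: itv N a b.
    by apply/setP => h; rewrite !inE -val_eqE /= val_b; lia.
  by rewrite cardsU1 mem_itv val_b IH; lia.
have -> : itv N a b.+1 = itv N a b by apply/setP => h; rewrite !mem_itv; lia.
by rewrite IH; lia.
Qed.

Variable B : {set {set T}}.
Hypothesis PN_B : PN B.

Lemma B1_sub : B1 B \subset B.
Proof. by apply/subsetP => X; rewrite inE => /andP []. Qed.

Lemma B0_sub : B0 B \subset B.
Proof. by apply/subsetP => X; rewrite inE => /andP []. Qed.

Lemma set2_of_mem (X : {set T}) : X \in B ->
  exists i j : T, [/\ 0 < i, i < j & X = [set i; j]].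
Proof. by move=> X_B; have [card_X X0] := PN_B.1 X X_B; apply: set2_of_card2. Qed.

Lemma PN_eq (X Y : {set T}) (h : T) : X \in B -> Y \in B -> h \in X -> h \in Y -> X = Y.
Proof.
move=> X_B Y_B h_X h_Y; apply/eqP; apply: contraTT isT => neq_XY.
have /pred0P /(_ h) := PN_B.2 X Y X_B Y_B neq_XY.
by rewrite /= h_X h_Y.
Qed.

Lemma ord0_notin_supp (C : {set {set T}}) : C \subset B -> ord0 \notin supp C.
Proof.
move=> sub_CB; apply/negP => /bigcupP [X X_C].
by have [_ /negP] := PN_B.1 X (subsetP sub_CB X X_C).
Qed.

Lemma mem_B0_B1 (X : {set T}) : X \in B -> (X \in B0 B) = (X \notin B1 B).
Proof.
move=> X_B; have [i [j [_ lt eq_X]]] := set2_of_mem X_B; subst X.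
by rewrite mem_B0_set2 // mem_B1_set2 // X_B.
Qed.

Lemma set2_gt0 (i j : T) : [set i; j] \in B -> 0 < i /\ 0 < j.
Proof.
move=> ij_B; have [_] := PN_B.1 _ ij_B; rewrite !inE negb_or => /andP [i0 j0].
by split; rewrite lt0n; [apply: contra i0 | apply: contra j0] => /eqP x0; apply/eqP/val_inj.
Qed.

Lemma set2_disjoint (c d p q : T) : [set c; d] \in B -> [set p; q] \in B ->
  [set c; d] != [set p; q] ->
  [/\ (p : nat) <> c, (p : nat) <> d, (q : nat) <> c & (q : nat) <> d].
Proof.
move=> cd_B pq_B neq; have meet x : x \in [set c; d] -> x \in [set p; q] -> False.
  by move=> x_cd x_pq; move/eqP: neq; apply; apply: (PN_eq cd_B pq_B x_cd x_pq).
by split=> /val_inj eq_x; [apply: (meet p) | apply: (meet p) | apply: (meet q) | apply: (meet q)];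
  rewrite !inE ?eq_x eqxx ?orbT.
Qed.

Lemma cov0_hull (J : {set T}) (h : T) : cov0 B J -> h \in J ->
  exists c d : T, [/\ c < d, [set c; d] \in B1 B, c <= h <= d &
    forall x : T, c <= x <= d -> x \in J].
Proof.
move=> [C [sub_C [_ ->]]] /bigcupP [Z Z_C h_Z].
have Z_B1 : Z \in B1 B := subsetP sub_C Z Z_C.
have [c [d [_ lt eq_Z]]] := set2_of_mem (subsetP B1_sub Z Z_B1); subst Z.
exists c, d; split=> //; first by rewrite -mem_hull_set2 // ltnW.
by move=> x x_rng; apply/bigcupP; exists [set c; d]; rewrite // mem_hull_set2 // ltnW.
Qed.

Lemma supp_B1_set2 (h : T) : h \in supp (B1 B) ->
  exists p q : T, [/\ p < q, [set p; q] \in B1 B & (h == p) || (h == q)].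
Proof.
move=> /bigcupP [X X_B1 h_X]; have [p [q [_ lt eq_X]]] := set2_of_mem (subsetP B1_sub _ X_B1).
by subst X; exists p, q; split=> //; rewrite !inE in h_X.
Qed.

End Structure.

Section StarBase.
Variable N : nat.
Local Notation T := 'I_N.+1.
Variable B : {set {set T}}.
Hypothesis star_B : starBase B.
Let PN_B : PN B := star_B.1.
Let nested_B := star_B.2.

Lemma hull_sub_supp (i j : T) : i < j -> [set i; j] \in B1 B ->
  forall h : T, i <= h <= j -> h \in supp (B1 B).
Proof.
move: {2}(j - i) (leqnn (j - i)) => n; elim: n i j => [| n IH] i j le_n lt ij_B1 h h_rng.
  by move: le_n lt; lia.
have [-> | neq_hi] := eqVneq h i; first by apply/bigcupP; exists [set i; j]; rewrite // !inE eqxx.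
have [-> | neq_hj] := eqVneq h j.
  by apply/bigcupP; exists [set i; j]; rewrite // !inE eqxx orbT.
have h_inner : h \in itv N i.+1 j.-1.
  by rewrite mem_itv; move: neq_hi neq_hj h_rng; rewrite -!val_eqE /=; lia.
have [c [d [lt_cd cd_B1 h_cd sub_cd]]] := cov0_hull PN_B (nested_B ij_B1 lt) h_inner.
have := sub_cd c; have := sub_cd d; rewrite !mem_itv (ltnW lt_cd) !leqnn /= => d_inner c_inner.
by apply: (IH c d) => //; move: (c_inner isT) (d_inner isT); lia.
Qed.

Lemma B1_noncrossing (i j p q : T) : i < j -> p < q -> [set i; j] \in B1 B ->
  [set p; q] \in B1 B -> ~~ [&& i < p, p < j & j < q].
Proof.
move: {2}(j - i) (leqnn (j - i)) => n; elim: n i j => [| n IH] i j le_n lt lt_pq ij_B1 pq_B1;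
  apply/negP => /and3P [ip pj jq].
  by move: le_n ip pj; lia.
have p_inner : p \in itv N i.+1 j.-1 by rewrite mem_itv; lia.
have [c [d [lt_cd cd_B1 /andP [cp pd] sub_cd]]] := cov0_hull PN_B (nested_B ij_B1 lt) p_inner.
have := sub_cd c; have := sub_cd d; rewrite !mem_itv (ltnW lt_cd) !leqnn /=.
move=> /(_ isT) d_in /(_ isT) c_in.
have [eq_cd | neq_cd] := eqVneq [set c; d] [set p; q].
  by have [_ eq_dq] := set2_inj lt_cd lt_pq eq_cd; move: d_in; rewrite eq_dq; lia.
have [pc pd' _ _] :=
  set2_disjoint PN_B (subsetP (B1_sub B) _ cd_B1) (subsetP (B1_sub B) _ pq_B1) neq_cd.
by have := IH c d _ lt_cd lt_pq cd_B1 pq_B1; lia.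
Qed.

Lemma cov0_sub_supp (J : {set T}) (h : T) : cov0 B J -> h \in J -> h \in supp (B1 B).
Proof.
move=> cov_J h_J; have [c [d [lt_cd cd_B1 h_cd _]]] := cov0_hull PN_B cov_J h_J.
exact: (hull_sub_supp lt_cd cd_B1).
Qed.

Lemma notin_hull (i j h : T) : i < j -> [set i; j] \in B1 B -> h \notin supp (B1 B) ->
  ~~ (i <= h <= j).
Proof. by move=> lt ij_B1; apply: contra; apply: hull_sub_supp. Qed.

Lemma cov0_B1_closed (J : {set T}) (p q : T) : cov0 B J -> p < q -> [set p; q] \in B1 B ->
  (p \in J) || (q \in J) -> (p \in J) && (q \in J).
Proof.
move=> cov_J lt_pq pq_B1 /orP [p_J | q_J].
- have [c [d [lt_cd cd_B1 /andP [cp pd] sub_cd]]] := cov0_hull PN_B cov_J p_J.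
  rewrite p_J sub_cd //=.
  have [eq_cd | neq_cd] := eqVneq [set c; d] [set p; q].
    by have [_ <-] := set2_inj lt_cd lt_pq eq_cd; rewrite (ltnW lt_cd) leqnn.
  have [n1 n2 n3 n4] :=
    set2_disjoint PN_B (subsetP (B1_sub B) _ cd_B1) (subsetP (B1_sub B) _ pq_B1) neq_cd.
  have [lt_dq | ] := ltnP d q; last by lia.
  by have := B1_noncrossing lt_cd lt_pq cd_B1 pq_B1; lia.
- have [c [d [lt_cd cd_B1 /andP [cq qd] sub_cd]]] := cov0_hull PN_B cov_J q_J.
  rewrite q_J sub_cd ?andbT //.
  have [eq_cd | neq_cd] := eqVneq [set c; d] [set p; q].
    by have [<- _] := set2_inj lt_cd lt_pq eq_cd; rewrite (ltnW lt_cd) leqnn.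
  have [n1 n2 n3 n4] :=
    set2_disjoint PN_B (subsetP (B1_sub B) _ cd_B1) (subsetP (B1_sub B) _ pq_B1) neq_cd.
  have [lt_pc | ] := ltnP p c; last by lia.
  by have := B1_noncrossing lt_pq lt_cd pq_B1 cd_B1; lia.
Qed.

Lemma cov0_even (a b : nat) : cov0 B (itv N a b) -> 1 <= a -> b <= N -> ~~ odd (b.+1 - a).
Proof.
move=> cov_J a1 le_bN; set J := itv N a b; set P := [set X in B1 B | X \subset J].
have P_B X : X \in P -> X \in B by move=> /setIdP [X_B1 _]; apply: (subsetP (B1_sub B)).
have triv_P : trivIset P.
  by apply/trivIsetP => X Y X_P Y_P; apply: PN_B.2; apply: P_B.
have cover_P : cover P = J.
  apply/setP => h; apply/bigcupP/idP => [[X /setIdP [_ /subsetP sub_XJ] /sub_XJ] // | h_J].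
  have [p [q [lt_pq pq_B1 h_pq]]] := supp_B1_set2 PN_B (cov0_sub_supp cov_J h_J).
  have /andP [p_J q_J] : (p \in J) && (q \in J).
    by apply: (cov0_B1_closed cov_J lt_pq pq_B1); case/orP: h_pq => /eqP <-; rewrite h_J ?orbT.
  exists [set p; q]; last by rewrite !inE.
  by rewrite inE pq_B1; apply/subsetP => x /set2P [] ->.
have part_P : partition P J.
  rewrite /partition cover_P eqxx triv_P /=; apply/negP => /P_B /PN_B.1 [].
  by rewrite cards0.
rewrite -(card_itv (N := N)) // -/J; have := card_uniform_partition (n := 2) _ part_P => ->.
  by rewrite oddM andbF.
by move=> X /P_B /PN_B.1 [].
Qed.

Lemma notin_supp_between (l r : nat) (x : T) : 1 <= l <= x -> x <= r < N ->
  cov0 B (itv N l x.-1) -> cov0 B (itv N x.+1 r) ->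
  (forall h : T, h = l.-1 :> nat -> h \notin supp (B1 B)) ->
  (forall h : T, h = r.+1 :> nat -> h \notin supp (B1 B)) -> x \notin supp (B1 B).
Proof.
move=> l_rng r_rng cov_l cov_r left_out right_out; apply/negP => /(supp_B1_set2 PN_B).
move=> [p [q [lt_pq pq_B1 /orP [] /eqP eq_x]]]; subst x.
- have [lt_rq | le_qr] := ltnP r q.
    have val_r : (inord r.+1 : T) = r.+1 :> nat by rewrite inordK; lia.
    by have := right_out _ val_r; rewrite (hull_sub_supp lt_pq pq_B1) // val_r; lia.
  by have := cov0_B1_closed cov_r lt_pq pq_B1; rewrite !mem_itv; lia.
- have [lt_pl | le_lp] := ltnP p l.
    have val_l : (inord l.-1 : T) = l.-1 :> nat by rewrite inordK; lia.
    by have := left_out _ val_l; rewrite (hull_sub_supp lt_pq pq_B1) // val_l; lia.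
  by have := cov0_B1_closed cov_l lt_pq pq_B1; rewrite !mem_itv; lia.
Qed.

End StarBase.

Section Sums.
Variable N : nat.
Local Notation T := 'I_N.+1.
Variable B : {set {set T}}.
Hypothesis PN_B : PN B.

Lemma B0_notin_supp_B1 (X : {set T}) (x : T) : X \in B0 B -> x \in X -> x \notin supp (B1 B).
Proof.
move=> X_B0 x_X; apply/negP => /bigcupP [Z Z_B1 x_Z].
have eq_XZ := PN_eq PN_B (subsetP (B0_sub B) _ X_B0) (subsetP (B1_sub B) _ Z_B1) x_X x_Z.
by move: X_B0; rewrite eq_XZ (mem_B0_B1 PN_B (subsetP (B1_sub B) _ Z_B1)) Z_B1.
Qed.

Section Enumeration.
Variables (f : nat -> T) (s : nat).
Hypothesis f_B : seqP B f s.
Local Notation pr k := [set f (2 * s + 1 - k); f k].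

Lemma B0_enum : B0 B =i map (fun k => pr k) (iota 1 s).
Proof.
have [_ [_ [_ [mem_B0 _]]]] := f_B; move=> X; apply/idP/mapP.
- by move/mem_B0 => [k [k_rng ->]]; exists k; rewrite // mem_iota; lia.
- by move=> [k]; rewrite mem_iota => k_rng ->; apply/mem_B0; exists k; split => //; lia.
Qed.

Lemma uniq_B0_enum : uniq (map (fun k => pr k) (iota 1 s)).
Proof.
apply/card_uniqP; rewrite size_map size_iota -(eq_card B0_enum).
by have [] := f_B.
Qed.

Lemma card_B0_count (Q : pred {set T}) :
  #|[set X in B0 B | Q X]| = count (fun k => Q (pr k)) (iota 1 s).
Proof.
have /card_uniqP card_filter := filter_uniq Q uniq_B0_enum.
rewrite -count_map -size_filter -card_filter.
by apply: eq_card => X; rewrite inE mem_filter B0_enum andbC.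
Qed.

Lemma B0_pair_inj j k : 1 <= j <= s -> 1 <= k <= s -> pr j = pr k -> j = k.
Proof.
move=> j_rng k_rng eq_pr.
have := nth_uniq set0 (_ : j.-1 < size (map (fun k => pr k) (iota 1 s)))
  (_ : k.-1 < size (map (fun k => pr k) (iota 1 s))) uniq_B0_enum.
rewrite !size_map !size_iota !(nth_map 0) ?size_iota ?nth_iota; try lia.
by rewrite !add1n !prednK ?eq_pr ?eqxx //; lia.
Qed.

Lemma f_lt_partner_B k : 1 <= k <= s -> f k < f (2 * s + 1 - k).
Proof. by move=> k_rng; have [_ [_ [lt_f _]]] := f_B; have [] := lt_f k k_rng. Qed.

Lemma f_mem_B0_pair k : 1 <= k <= 2 * s -> f k \in pr (minn k (2 * s + 1 - k)).
Proof.
move=> k_rng; case: (leqP k s) => [le_ks | gt_ks].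
  have -> : minn k (2 * s + 1 - k) = k by lia.
  by rewrite !inE eqxx orbT.
have -> : minn k (2 * s + 1 - k) = 2 * s + 1 - k by lia.
have -> : 2 * s + 1 - (2 * s + 1 - k) = k by lia.
by rewrite !inE eqxx.
Qed.

Lemma B0_pair_mem k : 1 <= k <= s -> pr k \in B0 B.
Proof. by move=> k_rng; rewrite B0_enum; apply/mapP; exists k; rewrite // mem_iota; lia. Qed.

Lemma f_mem_supp k : 1 <= k <= 2 * s -> f k \in supp B.
Proof.
move=> k_rng; apply/bigcupP; exists (pr (minn k (2 * s + 1 - k))); last exact: f_mem_B0_pair.
by apply: (subsetP (B0_sub B)); apply: B0_pair_mem; lia.
Qed.

Lemma f_inj_B j k : 1 <= j <= 2 * s -> 1 <= k <= 2 * s -> f j = f k -> j = k.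
Proof.
move=> j_rng k_rng eq_f.
have pr_B r : 1 <= r <= 2 * s -> pr (minn r (2 * s + 1 - r)) \in B.
  by move=> r_rng; apply: (subsetP (B0_sub B)); apply: B0_pair_mem; lia.
have eq_min : minn j (2 * s + 1 - j) = minn k (2 * s + 1 - k).
  apply: B0_pair_inj; [lia | lia |].
  apply: (PN_eq PN_B (pr_B j j_rng) (pr_B k k_rng) (f_mem_B0_pair j_rng)).
  by rewrite eq_f f_mem_B0_pair.
have neq_partner r : 1 <= r <= s -> f r != f (2 * s + 1 - r).
  by move=> r_rng; rewrite neq_ltn f_lt_partner_B.
case: (leqP j s) => j_s; case: (leqP k s) => k_s; try lia.
- have eq_k : k = 2 * s + 1 - j by lia.
  by move: (neq_partner j); rewrite eq_f eq_k eqxx; lia.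
- have eq_j : j = 2 * s + 1 - k by lia.
  by move: (neq_partner k); rewrite -eq_f eq_j eqxx; lia.
Qed.

Lemma f_notin_supp_B1 k : 1 <= k <= 2 * s -> f k \notin supp (B1 B).
Proof.
by move=> k_rng; apply: (B0_notin_supp_B1 _ (f_mem_B0_pair k_rng)); apply: B0_pair_mem; lia.
Qed.

End Enumeration.

Lemma ord0_notin_sumW : ord0 \notin sumW B.
Proof.
rewrite /sumW /sumSD inE; suff -> : [set X in B | ord0 \in wrset X] = set0 by rewrite cards0.
apply/setP => X; rewrite in_set0 in_set; apply/negP => /andP [X_B].
have [p [q [p0 lt eq_X]]] := set2_of_mem PN_B X_B; subst X.
by rewrite mem_wrset_set2 //; case: ifP => _ /=; lia.
Qed.

End Sums.

Section SumW.
Variable N : nat.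
Local Notation T := 'I_N.+1.
Variable B : {set {set T}}.
Hypothesis star_B : starBase B.
Let PN_B : PN B := star_B.1.

Lemma notin_wrset_B1 (X : {set T}) (x : T) : X \in B1 B -> x \notin supp (B1 B) ->
  x \notin wrset X.
Proof.
move=> X_B1 x_out; have [p [q [p0 lt eq_X]]] := set2_of_mem PN_B (subsetP (B1_sub B) _ X_B1).
subst X; move: (X_B1); rewrite mem_B1_set2 // => /andP [_ odd_pq].
by rewrite mem_wrset_set2 // odd_pq (notin_hull star_B lt X_B1 x_out).
Qed.

Lemma sumW_B1_invariant (i j : T) : i < j -> [set i; j] \in B1 B ->
  (i \in sumW B) = (j \in sumW B).
Proof.
move=> lt ij_B1; have [i0 j0] := set2_gt0 PN_B (subsetP (B1_sub B) _ ij_B1).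
have odd_ij : odd (j - i) by move: ij_B1; rewrite mem_B1_set2 // => /andP [].
rewrite /sumW /sumSD !in_set; congr (odd _); apply: eq_card => X.
rewrite (in_set (fun X => (X \in B) && (i \in wrset X))).
rewrite (in_set (fun X => (X \in B) && (j \in wrset X))).
case X_B: (X \in B) => //=.
have [p [q [p0 lt_pq eq_X]]] := set2_of_mem PN_B X_B; subst X.
have [eq_X | neq_X] := eqVneq [set p; q] [set i; j].
  by rewrite eq_X !mem_wrset_set2 // odd_ij; lia.
have [n1 n2 n3 n4] := set2_disjoint PN_B X_B (subsetP (B1_sub B) _ ij_B1) neq_X.
rewrite !mem_wrset_set2 //; case: ifP => odd_pq.
- have pq_B1 : [set p; q] \in B1 B by rewrite mem_B1_set2 // X_B odd_pq.
  have := B1_noncrossing star_B lt lt_pq ij_B1 pq_B1.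
  have := B1_noncrossing star_B lt_pq lt pq_B1 ij_B1.
  lia.
- have pq_B0 : [set p; q] \in B0 B by rewrite mem_B0_set2 // X_B odd_pq.
  have := notin_hull star_B lt ij_B1 (B0_notin_supp_B1 PN_B pq_B0 (setU11 _ _)).
  have := notin_hull star_B lt ij_B1 (B0_notin_supp_B1 PN_B pq_B0 (setU1r _ (set11 _))).
  lia.
Qed.

Lemma mem_sumW_free (f : nat -> T) (s : nat) (x : T) : seqP B f s ->
  0 < x -> x \notin supp (B1 B) ->
  (x \in sumW B) = odd (n_outside s (fun k => f k : nat) x).
Proof.
move=> f_B x0 x_out; rewrite /sumW /sumSD in_set.
have -> : [set X in B | x \in wrset X] = [set X in B0 B | x \in wrset X].
  apply: eq_finset => X /=; case X_B: (X \in B) => /=; last first.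
    by apply/esym/negbTE; apply: contraFN X_B => /andP [/(subsetP (B0_sub B))].
  rewrite (mem_B0_B1 PN_B X_B); case X_B1: (X \in B1 B) => //=.
  by apply/negbTE; apply: notin_wrset_B1.
have /= -> := card_B0_count f_B (fun X => x \in wrset X); congr odd.
apply: eq_in_count => k; rewrite mem_iota => k_rng.
have [_ [f_gt0 [f_pair _]]] := f_B.
have [lt even] : f k < f (2 * s + 1 - k) /\ ~~ odd (f (2 * s + 1 - k) - f k).
  by apply: f_pair; lia.
rewrite setUC mem_wrset_set2 ?f_gt0 //; last by lia.
case: ifP => [odd_d | _]; first by rewrite odd_d in even.
by rewrite x0 orbC.
Qed.

End SumW.

Lemma card_set2_pred (T : finType) (i j : T) (p : pred T) : p i != p j ->
  #|[set x in [set i; j] | p x]| = 1.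
Proof.
move=> neq_p; have neq_ij : i != j by apply: contraNneq neq_p => ->.
apply/eqP/cards1P; exists (if p i then i else j); apply/setP => x; rewrite !inE.
case: (eqVneq x i) => [-> | neq_xi] /=.
  by case: ifP => _; rewrite ?eqxx ?(negPf neq_ij).
case: (eqVneq x j) => [-> | neq_xj] /=.
  by move: neq_p; case: (p i); case: (p j) => //= _; rewrite ?eqxx // eq_sym (negPf neq_ij).
by case: ifP => _; rewrite ?(negPf neq_xi) ?(negPf neq_xj).
Qed.

Lemma card_cover_predC (T : finType) (P : {set {set T}}) (p : pred T) : trivIset P ->
  (forall A, A \in P -> exists i j : T, A = [set i; j] /\ p i != p j) ->
  #|[set x in cover P | p x]| = #|[set x in cover P | ~~ p x]|.
Proof.
move=> triv_P mixed_P; transitivity #|P|; last symmetry.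
  by apply: card_cover_pred => // A /mixed_P [i [j [-> neq]]]; apply: card_set2_pred.
apply: (card_cover_pred (K := fun x => ~~ p x)) => // A /mixed_P [i [j [-> neq]]].
by apply: card_set2_pred; move: neq; case: (p i); case: (p j).
Qed.

Section Balance.
Variable N : nat.
Local Notation T := 'I_N.+1.

Definition balanced (Y : {set T}) : bool :=
  #|[set x in Y | odd x]| == #|[set x in Y | ~~ odd x]|.

Variable B : {set {set T}}.
Hypothesis PN_B : PN B.

Lemma odd_set2_B1 (X : {set T}) : X \in B1 B -> exists i j : T, X = [set i; j] /\ odd i != odd j.
Proof.
move=> X_B1; have [i [j [_ lt eq_X]]] := set2_of_mem PN_B (subsetP (B1_sub B) _ X_B1).
exists i, j; split=> //; move: X_B1; rewrite eq_X mem_B1_set2 // => /andP [_]; lia.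
Qed.

Lemma trivIset_sub (C : {set {set T}}) : C \subset B -> trivIset C.
Proof.
by move=> sub_CB; apply/trivIsetP => X Y X_C Y_C; apply: PN_B.2; apply: (subsetP sub_CB).
Qed.

Lemma inSpan_cover (Y : {set T}) : inSpan B Y ->
  exists2 C : {set {set T}}, C \subset B & Y = cover C.
Proof.
move=> [C [sub_CB ->]]; exists C => //; apply/setP => x; rewrite inE.
case: (boolP (x \in cover C)) => [/bigcupP [X X_C x_X] | x_out].
- suff -> : [set Z in C | x \in Z] = [set X] by rewrite cards1.
  apply/setP => Z; rewrite !inE; apply/andP/eqP => [[Z_C x_Z] | ->] //.
  exact: (PN_eq PN_B (subsetP sub_CB _ Z_C) (subsetP sub_CB _ X_C) x_Z x_X).
- suff -> : [set Z in C | x \in Z] = set0 by rewrite cards0.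
  apply/setP => Z; rewrite !inE; apply/andP => [[Z_C x_Z]].
  by move/negP: x_out; apply; apply/bigcupP; exists Z.
Qed.

Lemma inSpan_sub_supp (Y : {set T}) : inSpan B Y -> {subset Y <= supp B}.
Proof.
move=> /inSpan_cover [C sub_CB ->] x /bigcupP [X X_C x_X].
by apply/bigcupP; exists X => //; apply: (subsetP sub_CB).
Qed.

Lemma balanced_inSpan (Y : {set T}) : #|B0 B| = 0 -> inSpan B Y -> balanced Y.
Proof.
move=> /eqP; rewrite cards_eq0 => /eqP B0_0 /inSpan_cover [C sub_CB ->].
apply/eqP/card_cover_predC; first exact: trivIset_sub.
move=> X X_C; apply: odd_set2_B1; have X_B := subsetP sub_CB _ X_C.
by move: (mem_B0_B1 PN_B X_B); rewrite B0_0 inE => /esym/negbFE.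
Qed.

Lemma not_balanced (Y : {set T}) (x0 : T) :
  (forall i j : T, i < j -> [set i; j] \in B1 B -> (i \in Y) = (j \in Y)) ->
  x0 \in Y -> x0 \notin supp (B1 B) ->
  (forall x : T, x \in Y -> x \notin supp (B1 B) -> odd x = odd x0) -> ~~ balanced Y.
Proof.
move=> closed_Y x0_Y x0_out par_Y; set S := supp (B1 B).
set P := [set X in B1 B | X \subset Y].
have cover_P : Y :&: S = cover P.
  apply/setP => x; apply/setIP/bigcupP => [[x_Y x_S] | [X /setIdP [X_B1 /subsetP sub_XY] x_X]].
    have [p [q [lt_pq pq_B1 x_pq]]] := supp_B1_set2 PN_B x_S.
    have [p_Y q_Y] : p \in Y /\ q \in Y.
      have := closed_Y _ _ lt_pq pq_B1.
      by case/orP: x_pq => /eqP eq_x; subst x => eq_Y; [rewrite -eq_Y | rewrite eq_Y].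
    exists [set p; q]; last by rewrite !inE.
    by rewrite inE pq_B1; apply/subsetP => z /set2P [] ->.
  by split; [apply: sub_XY | apply/bigcupP; exists X].
have balanced_S : #|[set x in Y :&: S | odd x]| = #|[set x in Y :&: S | ~~ odd x]|.
  rewrite cover_P; apply: card_cover_predC.
    by apply: trivIset_sub; apply/subsetP => X /setIdP [/(subsetP (B1_sub B))].
  by move=> X /setIdP [X_B1 _]; apply: odd_set2_B1.
have split_S (p : pred T) :
    #|[set x in Y | p x]| = #|[set x in Y :&: S | p x]| + #|[set x in Y :\: S | p x]|.
  rewrite -(cardsID S [set x in Y | p x]); congr (_ + _); apply: eq_card => x; rewrite !inE.
    by rewrite andbAC.
  by rewrite andbA.
rewrite /balanced !split_S balanced_S eqn_add2l.
have out_par (q : bool -> bool) :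
    [set x in Y :\: S | q (odd x)] = if q (odd x0) then Y :\: S else set0.
  by case: ifP => par_q; apply/setP => x; rewrite !inE;
    case: (boolP (x \in S)) => //= x_S; case: (boolP (x \in Y)) => //= x_Y;
    rewrite (par_Y x x_Y x_S) par_q.
have x0_YS : x0 \in Y :\: S by rewrite inE x0_out x0_Y.
rewrite (out_par id) (out_par negb) /=.
by case: (odd x0); rewrite cards0 ?[0 == _]eq_sym -lt0n; apply/card_gt0P; exists x0.
Qed.

End Balance.

Section TopPoints.
Variable N : nat.
Local Notation T := 'I_N.+1.

(* finset's lemma [setSD] shadows the definition, hence the qualified name. *)
Lemma mem_setSD (A C : {set T}) (x : T) : (x \in Defs.setSD A C) = ((x \in A) != (x \in C)).
Proof. by rewrite !inE; case: (x \in A); case: (x \in C). Qed.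

Variable B : {set {set T}}.
Hypothesis PN_B : PN B.

Lemma mem_wrset_max (X : {set T}) : X \in B ->
  (ord_max \in wrset X) = (X \in B0 B) || (ord_max \in X).
Proof.
move=> X_B; have [p [q [p0 lt eq_X]]] := set2_of_mem PN_B X_B; subst X.
rewrite mem_wrset_set2 // mem_B0_set2 // X_B /= !inE -!val_eqE /=.
by have := ltn_ord q; case: ifP => odd_pq /=; lia.
Qed.

Lemma mem_sumW_max (i : T) : odd N -> [set i; ord_max] \in B ->
  (ord_max \in sumW B) = odd (#|B0 B| + ~~ odd i).
Proof.
move=> odd_N Z_B; set Z := [set i; ord_max].
have max_Z : ord_max \in Z by rewrite !inE eqxx orbT.
have [i0 _] := set2_gt0 PN_B Z_B.
have lt_iN : i < N.
  rewrite ltn_neqAle -ltnS ltn_ord andbT; apply/eqP => eq_i.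
  have [] := PN_B.1 _ Z_B; rewrite /Z (_ : i = ord_max) ?setUid ?cards1 //; exact: val_inj.
have Z_B0 : (Z \in B0 B) = odd i by rewrite mem_B0_set2 // Z_B /=; lia.
rewrite /sumW /sumSD in_set.
have -> : [set X in B | ord_max \in wrset X] = Z |: B0 B.
  apply/setP => X; rewrite in_setU1 in_set; case X_B: (X \in B) => /=.
    rewrite mem_wrset_max //; case: (X \in B0 B); rewrite ?orbT ?orbF //=.
    apply/idP/eqP => [max_X | ->]; last exact: max_Z.
    by apply: (PN_eq PN_B X_B Z_B max_X); rewrite !inE eqxx orbT.
  apply/esym/negbTE; rewrite negb_or; apply/andP; split.
    by apply: contraFneq X_B => ->.
  by apply: contraFN X_B => /(subsetP (B0_sub B)).
by rewrite cardsU1 Z_B0 addnC.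
Qed.

Lemma supp_neq (n : nat) (h : T) : ~~ inSupp B n -> h \in supp B -> (h : nat) != n.
Proof. by move=> out_n h_B; apply: contra out_n => eq_h; apply/existsP; exists h; rewrite h_B. Qed.

Lemma pred_max_in_sumW (h : T) : #|B0 B| = 0 -> ~~ inSupp B N -> h \in supp B ->
  h = N.-1 :> nat -> h \in sumW B.
Proof.
move=> /eqP; rewrite cards_eq0 => /eqP B0_0 N_out /bigcupP [Y Y_B h_Y] val_h.
have wrset_h X : X \in B -> (h \in wrset X) = (h \in X).
  move=> X_B; have [p [q [p0 lt eq_X]]] := set2_of_mem PN_B X_B; subst X.
  have := mem_B0_B1 PN_B X_B; rewrite B0_0 inE mem_B1_set2 // X_B /= => /esym/negbFE odd_pq.
  have q_N : (q : nat) != N.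
    by apply: supp_neq N_out _; apply/bigcupP; exists [set p; q]; rewrite // !inE eqxx orbT.
  have := ltn_ord q; rewrite mem_wrset_set2 // odd_pq !inE -!val_eqE /= val_h; lia.
rewrite /sumW /sumSD in_set.
suff -> : [set X in B | h \in wrset X] = [set Y] by rewrite cards1.
apply/setP => X; rewrite in_set in_set1; apply/andP/eqP => [[X_B h_X] | ->].
  by rewrite wrset_h // in h_X; apply: (PN_eq PN_B X_B Y_B h_X).
by rewrite Y_B wrset_h.
Qed.

End TopPoints.

Definition free_point (N : nat) (B : {set {set 'I_N.+1}}) : pred nat :=
  fun x => [&& 0 < x, x <= N & (inord x : 'I_N.+1) \notin supp (B1 B)].

Section Plus.
Variable N : nat.
Local Notation T := 'I_N.+1.
Variable B : {set {set T}}.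
Hypothesis star_B : starBase B.
Let PN_B : PN B := star_B.1.

Lemma free_point_ord (x : T) : free_point B x = (0 < x) && (x \notin supp (B1 B)).
Proof. by rewrite /free_point inord_val leq_ord. Qed.

Lemma cov0_not_free (a b h : nat) : cov0 B (itv N a b) -> 1 <= h -> a <= h <= b -> h <= N ->
  ~~ free_point B h.
Proof.
move=> cov_ab h1 h_rng h_N; rewrite /free_point h1 h_N /= negbK.
by apply: (cov0_sub_supp star_B cov_ab); rewrite mem_itv inordK; lia.
Qed.

Lemma supp_B1_sub_supp : {subset supp (B1 B) <= supp B}.
Proof.
by move=> x /bigcupP [X X_B1 x_X]; apply/bigcupP; exists X => //; apply: (subsetP (B1_sub B)).
Qed.

Lemma setSD_sumW_gt0 (C : {set T}) (x : T) : ord0 \notin C -> x \in Defs.setSD (sumW B) C ->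
  0 < x.
Proof.
move=> C0; apply: contraTT; rewrite lt0n negbK => /eqP x0.
rewrite (_ : x = ord0); last exact: val_inj.
by rewrite mem_setSD (negPf C0) (negPf (ord0_notin_sumW PN_B)).
Qed.

Lemma setSD_sumW_B1_invariant (C : {set T}) (i j : T) : i < j -> [set i; j] \in B1 B ->
  (i \in C) = (j \in C) -> (i \in Defs.setSD (sumW B) C) = (j \in Defs.setSD (sumW B) C).
Proof. by move=> lt ij_B1 eq_C; rewrite !mem_setSD eq_C (sumW_B1_invariant star_B lt ij_B1). Qed.

Section Sequence.
Variables (f : nat -> T) (s : nat).
Hypothesis f_B : seqP B f s.
Local Notation fn := (fun k => f k : nat).

Lemma f_gt0_B k : 1 <= k <= 2 * s -> 0 < f k.
Proof. by have [_ [f_gt0 _]] := f_B; apply: f_gt0. Qed.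

Lemma gap_cov0 k : k != s -> 1 <= k < 2 * s -> cov0 B (itv N (f k).+1 (f k.+1).-1).
Proof.
move=> neq_ks k_rng; have [_ [_ [_ [_ [low high]]]]] := f_B.
by case: (ltngtP k s) => [lt | gt | eq]; [apply: low | apply: high | move: neq_ks; rewrite eq eqxx];
  lia.
Qed.

Lemma mem_setSD_sumW_free (C : {set T}) (x : T) : 0 < x -> x \notin supp (B1 B) ->
  (x \in Defs.setSD (sumW B) C) = (odd (n_outside s fn x) != (x \in C)).
Proof. by move=> x0 x_out; rewrite mem_setSD (mem_sumW_free star_B f_B). Qed.

Hypothesis N_out : ~~ inSupp B N.

Lemma f_lt_N_B k : 1 <= k <= 2 * s -> f k < N.
Proof.
move=> k_rng; have := supp_neq N_out (f_mem_supp f_B k_rng).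
by have := leq_ord (f k); lia.
Qed.

Hypothesis odd_s : odd s.

Lemma frame_B : frame N s fn (free_point B).
Proof.
have [_ [_ [f_pair _]]] := f_B.
split => //.
- move=> k k_rng; rewrite free_point_ord f_gt0_B //=.
  exact: (f_notin_supp_B1 PN_B f_B).
- by move=> j k j_rng k_rng /val_inj; apply: (f_inj_B PN_B f_B).
- exact: (f_lt_partner_B f_B).
- by move=> k /f_pair [lt even]; lia.
- exact: f_lt_N_B.
- move=> k neq_ks k_rng h h_rng; apply: (cov0_not_free (gap_cov0 neq_ks k_rng)); try lia.
  by have := f_lt_N_B (_ : 1 <= k.+1 <= 2 * s); lia.
- move=> k neq_ks k_rng lt_f.
  have := cov0_even star_B (gap_cov0 neq_ks k_rng) (_ : 1 <= (f k).+1).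
  by have := f_lt_N_B (_ : 1 <= k.+1 <= 2 * s); lia.
Qed.

Section RightCase.
Variable u : nat.
Hypotheses (caseII_B : caseII B f s) (u_rng : (f (2 * s)).+1 <= u <= N.-1).
Hypotheses (cov_lu : cov0 B (itv N (f (2 * s)).+1 u.-1)) (cov_ru : cov0 B (itv N u.+1 N.-1)).

Lemma right_end_B : right_end N s u fn (free_point B).
Proof.
have s_gt0 : 0 < s by lia.
have f1_N : f 1 < N by apply: f_lt_N_B; lia.
have f1_gt0 : 0 < f 1 by apply: f_gt0_B; lia.
have odd_f1 : odd (f 1).
  by have := cov0_even star_B caseII_B.1 (leqnn 1) (_ : (f 1).-1 <= N); lia.
split => //.
- by move=> h h_rng; apply: (cov0_not_free caseII_B.1); lia.
- move=> h h_rng neq_hu; case: (ltngtP h u) => [lt | gt | eq]; last by rewrite eq eqxx in neq_hu.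
    by apply: (cov0_not_free cov_lu); lia.
  by apply: (cov0_not_free cov_ru); lia.
- have := cov0_even star_B cov_lu (_ : 1 <= (f (2 * s)).+1) (_ : u.-1 <= N).
  have := odd_f_partner frame_B (_ : 1 <= 1 <= s); rewrite addnK /=.
  by lia.
- by lia.
- by lia.
Qed.

Lemma not_balanced_right : ~~ balanced (Defs.setSD (sumW B) (itv N u N)).
Proof.
have s_gt0 : 0 < s by lia.
have F := frame_B; have R := right_end_B.
have val_u : (inord u : T) = u :> nat by rewrite inordK; lia.
have u_out : (inord u : T) \notin supp (B1 B).
  apply: (notin_supp_between star_B (l := (f (2 * s)).+1) (r := N.-1)); rewrite ?val_u //; try lia.
  - by move=> h /= /val_inj ->; apply: (f_notin_supp_B1 PN_B f_B); lia.
  - move=> h val_h; apply: contra N_out => /supp_B1_sub_supp h_B.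
    by apply/existsP; exists h; rewrite h_B /=; apply/eqP; rewrite /= val_h; lia.
have f1_out : f 1 \notin supp (B1 B) by apply: (f_notin_supp_B1 PN_B f_B); lia.
have f1_gt0 : 0 < f 1 by apply: f_gt0_B; lia.
apply: (not_balanced PN_B (x0 := f 1)) => [i j lt ij_B1 | | | x].
- apply: setSD_sumW_B1_invariant => //; rewrite !mem_itv.
  have := notin_hull star_B lt ij_B1 u_out; rewrite val_u => u_notin.
  have [i0 j0] := set2_gt0 PN_B (subsetP (B1_sub B) _ ij_B1).
  by have := leq_ord i; have := leq_ord j; lia.
- rewrite mem_setSD_sumW_free // mem_itv.
  by have := eps_right_f1 F R; have := leq_ord (f 1); lia.
- exact: f1_out.
- move=> x_Y x_out; have x_gt0 : 0 < x by apply: setSD_sumW_gt0 x_Y; rewrite mem_itv.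
  apply: (odd_eps_right F R); first by rewrite free_point_ord x_gt0.
  by move: x_Y; rewrite mem_setSD_sumW_free // mem_itv; have := leq_ord x; lia.
Qed.

End RightCase.

Section LeftCase.
Variable u : nat.
Hypotheses (caseI_B : caseI B f s) (u_rng : 1 <= u <= (f 1).-1).
Hypotheses (cov_lu : cov0 B (itv N 1 u.-1)) (cov_ru : cov0 B (itv N u.+1 (f 1).-1)).

Lemma left_end_B : odd N -> left_end N s u fn (free_point B).
Proof.
move=> odd_N.
have s_gt0 : 0 < s by lia.
have f1_N : f 1 < N by apply: f_lt_N_B; lia.
have top_N : f (2 * s) < N by apply: f_lt_N_B; lia.
split => //.
- move=> h h_rng neq_hu; case: (ltngtP h u) => [lt | gt | eq]; last by rewrite eq eqxx in neq_hu.
    by apply: (cov0_not_free cov_lu); lia.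
  by apply: (cov0_not_free cov_ru); lia.
- by have := cov0_even star_B cov_lu (leqnn 1) (_ : u.-1 <= N); lia.
- by lia.
- by lia.
- by have := cov0_even star_B caseI_B.2 (_ : 1 <= (f (2 * s)).+1) (_ : N.-1 <= N); lia.
- by move=> h h_rng; apply: (cov0_not_free caseI_B.2); lia.
Qed.

Lemma not_balanced_left : odd N ->
  ~~ balanced (Defs.setSD (sumW B) (Defs.setSD [set ord_max] (itv N 1 u))).
Proof.
have s_gt0 : 0 < s by lia.
move=> odd_N; have F := frame_B; have L := left_end_B odd_N.
have f1_N : f 1 < N by apply: f_lt_N_B; lia.
have top_N : f (2 * s) < N by apply: f_lt_N_B; lia.
have val_u : (inord u : T) = u :> nat by rewrite inordK; lia.
have u_out : (inord u : T) \notin supp (B1 B).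
  apply: (notin_supp_between star_B (l := 1) (r := (f 1).-1)); rewrite ?val_u //; try lia.
  - move=> h /= h0; rewrite (_ : h = ord0); last exact: val_inj.
    by apply: (ord0_notin_supp PN_B); apply: B1_sub.
  - move=> h val_h; rewrite (_ : h = f 1); last by apply: val_inj; rewrite /= val_h; lia.
    by apply: (f_notin_supp_B1 PN_B f_B); lia.
have mem_max (x : T) : (x \in [set ord_max]) = (x == N :> nat) by rewrite inE -val_eqE.
have top_out : f (2 * s) \notin supp (B1 B) by apply: (f_notin_supp_B1 PN_B f_B); lia.
have top_gt0 : 0 < f (2 * s) by apply: f_gt0_B; lia.
apply: (not_balanced PN_B (x0 := f (2 * s))) => [i j lt ij_B1 | | | x].
- apply: setSD_sumW_B1_invariant => //; rewrite !mem_setSD !mem_max !mem_itv.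
  have := notin_hull star_B lt ij_B1 u_out; rewrite val_u => u_notin.
  have [i_B j_B] : i \in supp B /\ j \in supp B.
    by split; apply: supp_B1_sub_supp; apply/bigcupP; exists [set i; j]; rewrite // !inE eqxx ?orbT.
  have := supp_neq N_out i_B; have := supp_neq N_out j_B.
  have [i0 j0] := set2_gt0 PN_B (subsetP (B1_sub B) _ ij_B1).
  by have := leq_ord i; have := leq_ord j; lia.
- rewrite mem_setSD_sumW_free // mem_setSD mem_max mem_itv.
  by have := eps_left_top F odd_N L; lia.
- exact: top_out.
- move=> x_Y x_out; have x_gt0 : 0 < x.
    by apply: setSD_sumW_gt0 x_Y; rewrite mem_setSD mem_max mem_itv /=; lia.
  move: x_Y; rewrite mem_setSD_sumW_free // mem_setSD mem_max mem_itv.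
  have [x_N | x_ltN] := eqVneq (x : nat) N.
    rewrite (n_outside_above (f := fn)) => [| k k_rng]; last by have := f_lt_N_B k_rng; lia.
    by lia.
  move=> in_Y; apply: (odd_eps_left F odd_N L); first by rewrite free_point_ord x_gt0.
    by have := leq_ord x; lia.
  by move: in_Y; have := leq_ord x; lia.
Qed.

End LeftCase.
End Sequence.
End Plus.

Section Step.
Variable N : nat.
Local Notation T := 'I_N.+1.
Hypothesis odd_N : odd N.

Lemma Xminus_max_in_sumW (B : {set {set T}}) : Xminus B -> ord_max \in sumW B.
Proof.
move=> [[PN_B _] [f [s [f_B [_ [even_s odd_s]]]]]].
have [i [par_i Z_B]] : exists i : T, odd i = odd s /\ [set i; ord_max] \in B.
  case: (boolP (odd s)) => [/odd_s | /even_s] [i [par_i Z_B]]; exists i; split => //.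
  by apply/negbTE.
have [card_B0 _] := f_B.
by rewrite (mem_sumW_max PN_B odd_N Z_B) oddD oddb par_i card_B0; case: (odd s).
Qed.

Lemma eps_not_balanced (B : {set {set T}}) (Y : {set T}) : Xplus B -> odd #|B0 B| ->
  (exists u, uB B u /\ (~~ odd u -> Y = Defs.setSD (sumW B) (itv N u N)) /\
     (odd u -> Y = Defs.setSD (sumW B) (Defs.setSD [set ord_max] (itv N 1 u)))) ->
  ~~ balanced Y.
Proof.
move=> [star_B _] odd_B0 [u [[f [s [f_B [[N_out _] [_ cases]]]]] [Y_even Y_odd]]].
have odd_s : odd s by have [<- _] := f_B.
case: cases => [[caseI_B [u_rng [cov_lu cov_ru]]] | [caseII_B [u_rng [cov_lu cov_ru]]]].
- have L := left_end_B star_B f_B N_out odd_s caseI_B u_rng cov_lu cov_ru odd_N.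
  rewrite (Y_odd (odd_u L)).
  exact: (not_balanced_left star_B f_B N_out odd_s caseI_B u_rng cov_lu cov_ru odd_N).
- have R := right_end_B star_B f_B N_out odd_s caseII_B u_rng cov_lu cov_ru.
  rewrite (Y_even (even_u R)).
  exact: (not_balanced_right star_B f_B N_out odd_s caseII_B u_rng cov_lu cov_ru).
Qed.

Lemma X0plus'_of_eps (B C : {set {set T}}) (Y : {set T}) :
  X0plus' C -> epsP B Y -> inSpan C Y -> X0plus' B.
Proof.
move=> [[[PN_C _] [f [s [_ [N_out _]]]]] [C0 Nm1_out]] eps_Y span_Y.
have Y_supp := inSpan_sub_supp PN_C span_Y.
have out_Y (h : T) (n : nat) : ~~ inSupp C n -> h = n :> nat -> h \notin Y.
  move=> n_out val_h; apply: contra n_out => /Y_supp h_C.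
  by apply/existsP; exists h; rewrite h_C /=; apply/eqP.
case: eps_Y => [[[X_B | [X_B B0_0]] eq_Y] | [X_B [odd_B0 eps_u]]].
- by move: (out_Y ord_max N N_out erefl); rewrite eq_Y Xminus_max_in_sumW.
- split => //; split => //; apply/negP => /existsP [h /andP [h_B /eqP val_h]].
  have [[PN_B _] [_ [_ [_ [N_out_B _]]]]] := X_B.
  by move: (out_Y h _ Nm1_out val_h); rewrite eq_Y (pred_max_in_sumW PN_B B0_0 N_out_B h_B val_h).
- by move: (eps_not_balanced X_B odd_B0 eps_u); rewrite (balanced_inSpan PN_C C0 span_Y).
Qed.

End Step.

Theorem mainTheorem9 (N : nat) (HNodd : odd N) (HN3 : 3 <= N)
  (B' B : {set {set 'I_N.+1}}) :
  Xplus B' -> X0plus' B -> preceq B' B -> X0plus' B'.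
Proof.
move=> _ X_B chain; elim: chain X_B => [// | C0 C1 C2 _ _ [Y [eps_Y span_Y]] _ IH] X_B.
exact (X0plus'_of_eps HNodd (IH X_B) eps_Y span_Y).
Qed.
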